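(* Let $\mathbb N$ be a strongly connected symmetric directed graph on $m$ vertices without self-arcs, with arc matrices $C_{ij}$ (each with $n$ columns) having orthonormal rows (so $C_{ij}C_{ij}'=I$), such that $\bar{\mathbb N}$ is well-configured. Let $d_i=|\mathcal N_i|$. For arbitrary $x_i(0)\in\mathbb R^n$, define for each agent $i$ $$x_i(t+1)=x_i(t)-\frac{1}{2(d_i+1)}\sum_{j\in\mathcal N_i}\big(C_{ij}'C_{ij}+C_{ji}'C_{ji}\big)\big(x_i(t)-x_j(t)\big).$$ Then all $x_i(t)$ converge to a common vector $x^*\in\mathbb R^n$ exponentially fast, i.e. there are constants $c>0$, $\rho\in[0,1)$ with $\|x_i(t)-x^*\|\le c\rho^t$ for all $i,t$.
   Context: A directed graph is symmetric if whenever $(i,j)$ is an arc so is $(j,i)$. $\mathcal N_i$ is the set of neighbors of agent $i$. Each arc $(j,i)$ carries a real matrix $C_{ji}$ with $n$ columns; $'$ denotes transpose. $\bar{\mathbb N}$ is well-configured if for all $x_1,\dots,x_m\in\mathbb R^n$, $C_{ji}x_i=C_{ji}x_j$ for every arc $(j,i)$ implies $x_1=\cdots=x_m$. *)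

From HB Require Import structures.
From mathcomp Require Import all_boot all_order all_algebra.
From mathcomp Require Import reals.
Set Implicit Arguments. Unset Strict Implicit. Unset Printing Implicit Defensive.
Import Order.TTheory GRing.Theory Num.Theory.
Local Open Scope ring_scope.

Definition vnorm (R : realType) (n : nat) (v : 'cV[R]_n) : R :=
  Num.sqrt (\sum_(k < n) v k 0 ^+ 2).

(* Directed graph on 'I_m given by arc relation adj : adj j i means arc (j,i). *)
Definition symmetric_graph (m : nat) (adj : rel 'I_m) : Prop :=
  forall i j, adj i j -> adj j i.

Definition no_self_arcs (m : nat) (adj : rel 'I_m) : Prop :=
  forall i, ~~ adj i i.

Definition strongly_connected (m : nat) (adj : rel 'I_m) : Prop :=
  forall i j, connect adj i j.

Definition nbrs (m : nat) (adj : rel 'I_m) (i : 'I_m) : {set 'I_m} :=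
  [set j | adj j i].

(* Well-configured: C_{ji} x_i = C_{ji} x_j on every arc (j,i) forces consensus.
   C j i is the matrix on arc (j,i), with rows j i rows and n columns. *)
Definition well_configured (R : realType) (m n : nat) (adj : rel 'I_m)
    (rows : 'I_m -> 'I_m -> nat) (C : forall j i : 'I_m, 'M[R]_(rows j i, n)) : Prop :=
  forall x : 'I_m -> 'cV[R]_n,
    (forall j i, adj j i -> C j i *m x i = C j i *m x j) ->
    forall i j, x i = x j.

From HB Require Import structures.
From mathcomp Require Import all_boot all_order all_algebra.
From mathcomp Require Import reals.
From mathcomp Require Import ring lra.
From Stdlib Require Import FunctionalExtensionality.
Import Order.TTheory GRing.Theory Num.Theory passmx.
Set Implicit Arguments. Unset Strict Implicit. Unset Printing Implicit Defensive.
Local Open Scope ring_scope.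

(* With weights w_i = d_i + 1 the weighted sum of the states is invariant: w_i
   times the step size is 1/2, and the corrections along the arcs (i,j) and
   (j,i) carry the same symmetric gain M_ij = C_ij'C_ij + C_ji'C_ji, so they
   cancel in pairs.  Let e be the deviation from the weighted mean and
   L(e) = sum_i sum_(j in N_i) (e_i - e_j)' M_ij (e_i - e_j).  One step lowers
   sum_i w_i |e_i|^2 by at least L(e) / (2(m+1)); the quadratic term of the step
   is controlled because each C'C is an orthogonal projection.  Well-configuredness
   makes L(e) + |sum_i w_i e_i|^2 positive definite, so by finite dimensionality
   L dominates a multiple of sum_i w_i |e_i|^2 on the hyperplane where the
   weighted sum vanishes, and the weighted deviation decays geometrically. *)

Section QuadraticForms.
Variable R : realFieldType.

Definition symbilinear (V : lmodType R) (b : V -> V -> R) :=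
  [/\ forall u u' v, b (u + u') v = b u v + b u' v,
      forall c u v, b (c *: u) v = c * b u v &
      forall u v, b u v = b v u].

Lemma symbilinear_suml (V : lmodType R) (b : V -> V -> R) (I : Type) (r : seq I)
    (P : pred I) (F : I -> V) v :
  symbilinear b -> b (\sum_(i <- r | P i) F i) v = \sum_(i <- r | P i) b (F i) v.
Proof.
case=> bD bZ _; have b0 : b 0 v = 0 by rewrite -(scale0r (0 : V)) bZ mul0r.
exact: (big_morph (b^~ v) (fun u u' => bD u u' v) b0).
Qed.

Lemma symbilinearD (V : lmodType R) (b1 b2 : V -> V -> R) :
  symbilinear b1 -> symbilinear b2 -> symbilinear (fun u v => b1 u v + b2 u v).
Proof.
case=> D1 Z1 S1 [D2 Z2 S2]; split=> [u u' v|c u v|u v].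
- by rewrite D1 D2 addrACA.
- by rewrite Z1 Z2 mulrDr.
- by rewrite S1 S2.
Qed.

Lemma symbilinear_comp (U V : lmodType R) (f : {linear U -> V}) (b : V -> V -> R) :
  symbilinear b -> symbilinear (fun u v => b (f u) (f v)).
Proof.
by case=> bD bZ bS; split=> [u u' v|c u v|u v] /=; rewrite ?linearD ?linearZ /=.
Qed.

Definition gram d (b : 'rV[R]_d -> 'rV[R]_d -> R) : 'M[R]_d :=
  \matrix_(a, c) b (delta_mx 0 a) (delta_mx 0 c).

Lemma quad_formE d (X : 'M[R]_d) (u v : 'rV[R]_d) :
  (u *m X *m v^T) 0 0 = \sum_a \sum_c u 0 a * v 0 c * X a c.
Proof.
rewrite mxE exchange_big; apply: eq_bigr => c _; rewrite !mxE big_distrl.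
by apply: eq_bigr => a _; rewrite ?mxE /=; ring.
Qed.

Lemma symbilinear_gramE d (b : 'rV[R]_d -> 'rV[R]_d -> R) u v :
  symbilinear b -> b u v = (u *m gram b *m v^T) 0 0.
Proof.
move=> hb; have [_ bZ bS] := hb; rewrite quad_formE.
rewrite [in LHS](row_sum_delta u) symbilinear_suml //; apply: eq_bigr => a _.
rewrite bZ bS [in LHS](row_sum_delta v) symbilinear_suml // big_distrr.
by apply: eq_bigr => c _; rewrite bZ bS mxE; exact: mulrA.
Qed.

Lemma norm_mul_le (p q s : R) : p ^+ 2 <= s -> q ^+ 2 <= s -> `|p * q| <= s.
Proof.
move=> hp hq; have := sqr_ge0 (p - q); have := sqr_ge0 (p + q).
move: hp hq; rewrite !expr2 => hp hq h1 h2.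
by case: (lerP 0 (p * q)) => h; [rewrite ger0_norm | rewrite ltr0_norm]; nra.
Qed.

Lemma quad_form_le d (X : 'M[R]_d) (u : 'rV[R]_d) :
  (u *m X *m u^T) 0 0 <= (\sum_a \sum_c `|X a c|) * \sum_c u 0 c ^+ 2.
Proof.
set s := \sum_c u 0 c ^+ 2.
have sq_le a : u 0 a ^+ 2 <= s.
  by rewrite /s (bigD1 a) //= lerDl; apply: sumr_ge0 => c _; apply: sqr_ge0.
rewrite quad_formE big_distrl; apply: ler_sum => a _.
rewrite big_distrl; apply: ler_sum => c _; apply: le_trans (ler_norm _) _.
rewrite normrM mulrC ler_wpM2l //; exact: norm_mul_le (sq_le a) (sq_le c).
Qed.
Lemma posdef_coercive d (b : 'rV[R]_d -> 'rV[R]_d -> R) :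
  symbilinear b -> (forall u, u != 0 -> 0 < b u u) ->
  exists2 K, 0 < K & forall u : 'rV[R]_d, \sum_c u 0 c ^+ 2 <= K * b u u.
Proof.
move=> hb bpos; have [bD bZ bS] := hb; set P := gram b.
have bP u v : b u v = (u *m P *m v^T) 0 0 by exact: symbilinear_gramE.
have Punit : P \in unitmx.
  rewrite -row_free_unit; apply: inj_row_free => u uP0; apply/eqP.
  by apply: contraT => /bpos; rewrite bP uP0 mul0mx mxE ltxx.
pose K0 := \sum_a \sum_c `|(invmx P)^T a c|.
have K0_ge0 : 0 <= K0 by apply: sumr_ge0 => a _; apply: sumr_ge0.
exists (K0 + 1) => [|u]; first lra.
set s := \sum_c _; have s_ge0 : 0 <= s by apply: sumr_ge0 => c _; apply: sqr_ge0.
(* [y] represents the functional [v |-> u . v] through [b]. *)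
pose y := u *m invmx P; have yP : y *m P = u by rewrite mulmxKV.
have byu : b y u = s by rewrite bP yP mxE; apply: eq_bigr => c _; rewrite !mxE expr2.
have byy : b y y <= K0 * s by rewrite bP yP trmx_mul mulmxA quad_form_le.
have b_ge0 v : 0 <= b v v.
  have [->|/bpos/ltW //] := eqVneq v 0; by rewrite bP !mul0mx mxE.
have := b_ge0 (y + (- (K0 + 1)) *: u).
rewrite bD bZ (bS y) (bS u) !bD !bZ (bS u y) byu; nra.
Qed.

Lemma posdef_dominates (V : vectType R) (b g : V -> V -> R) :
  symbilinear b -> symbilinear g -> (forall u, u != 0 -> 0 < b u u) ->
  exists2 lam, 0 < lam & forall u, lam * g u u <= b u u.
Proof.
move=> hb hg bpos; set e := vbasis {:V}.
have coordK := rVofK (vbasisP {:V}).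
pose phi : {linear 'rV_(\dim {:V}) -> V} := vecof e.
have hb' := symbilinear_comp phi hb; have hg' := symbilinear_comp phi hg.
have [K K_gt0 HK] : exists2 K, 0 < K &
    forall r : 'rV_(\dim {:V}), \sum_c r 0 c ^+ 2 <= K * b (phi r) (phi r).
  apply: posdef_coercive hb' _ => r /negbTE r_neq0; apply: bpos.
  by rewrite vecof_eq0 ?r_neq0 //; exact: vbasisP.
pose G0 := \sum_a \sum_c `|gram (fun r r' => g (phi r) (phi r')) a c|.
have G0_ge0 : 0 <= G0 by apply: sumr_ge0 => a _; apply: sumr_ge0.
exists ((K * (G0 + 1))^-1) => [|u]; first by rewrite invr_gt0 mulr_gt0 //; lra.
rewrite -(coordK u); set r := rVof e u.
have gle : g (phi r) (phi r) <= G0 * \sum_c r 0 c ^+ 2.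
  by rewrite (symbilinear_gramE _ _ hg') quad_form_le.
have s_ge0 : 0 <= \sum_c r 0 c ^+ 2 by apply: sumr_ge0 => c _; apply: sqr_ge0.
rewrite ler_pdivrMl ?mulr_gt0 //; last lra.
have := HK r; nra.
Qed.

End QuadraticForms.

Section DotProduct.
Variable R : realFieldType.
Implicit Types (k : nat).

Definition dot k (u v : 'cV[R]_k) : R := (u^T *m v) 0 0.

Lemma dotE k (u v : 'cV[R]_k) : dot u v = \sum_a u a 0 * v a 0.
Proof. by rewrite /dot mxE; apply: eq_bigr => a _; rewrite mxE. Qed.

Lemma dotC k (u v : 'cV[R]_k) : dot u v = dot v u.
Proof. by rewrite !dotE; apply: eq_bigr => a _; rewrite mulrC. Qed.

Lemma dot_symbilinear k : symbilinear (@dot k).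
Proof.
split=> [u u' v|c u v|]; last exact: dotC.
  by rewrite !dotE -big_split; apply: eq_bigr => a _; rewrite mxE mulrDl.
by rewrite !dotE big_distrr; apply: eq_bigr => a _; rewrite mxE /= mulrA.
Qed.

Lemma dotDl k (u u' v : 'cV[R]_k) : dot (u + u') v = dot u v + dot u' v.
Proof. by case: (dot_symbilinear k). Qed.

Lemma dotZl k c (u v : 'cV[R]_k) : dot (c *: u) v = c * dot u v.
Proof. by case: (dot_symbilinear k). Qed.

Lemma dot0l k (v : 'cV[R]_k) : dot 0 v = 0.
Proof. by rewrite -(scale0r 0) dotZl mul0r. Qed.

Lemma dotDr k (u u' v : 'cV[R]_k) : dot v (u + u') = dot v u + dot v u'.
Proof. by rewrite dotC dotDl !(dotC v). Qed.

Lemma dotZr k c (u v : 'cV[R]_k) : dot v (c *: u) = c * dot v u.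
Proof. by rewrite dotC dotZl (dotC v). Qed.

Lemma dotNl k (u v : 'cV[R]_k) : dot (- u) v = - dot u v.
Proof. by rewrite -scaleN1r dotZl mulN1r. Qed.

Lemma dotNr k (u v : 'cV[R]_k) : dot v (- u) = - dot v u.
Proof. by rewrite dotC dotNl dotC. Qed.

Lemma dotBl k (u u' v : 'cV[R]_k) : dot (u - u') v = dot u v - dot u' v.
Proof. by rewrite dotDl dotNl. Qed.

Lemma dotBr k (u u' v : 'cV[R]_k) : dot v (u - u') = dot v u - dot v u'.
Proof. by rewrite dotDr dotNr. Qed.

Lemma dot_suml k (I : finType) (P : pred I) (F : I -> 'cV[R]_k) v :
  dot (\sum_(i | P i) F i) v = \sum_(i | P i) dot (F i) v.
Proof. exact: symbilinear_suml (dot_symbilinear k). Qed.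

Lemma dot_sumr k (I : finType) (P : pred I) (F : I -> 'cV[R]_k) v :
  dot v (\sum_(i | P i) F i) = \sum_(i | P i) dot v (F i).
Proof. by rewrite dotC dot_suml; apply: eq_bigr => i _; rewrite dotC. Qed.

Lemma dot_mulmx k l (u : 'cV[R]_k) (A : 'M[R]_(k, l)) v :
  dot u (A *m v) = dot (A^T *m u) v.
Proof. by rewrite /dot trmx_mul trmxK mulmxA. Qed.

Lemma dot_self_ge0 k (u : 'cV[R]_k) : 0 <= dot u u.
Proof. by rewrite dotE; apply: sumr_ge0 => a _; rewrite -expr2 sqr_ge0. Qed.

Lemma dot_self_eq0 k (u : 'cV[R]_k) : dot u u = 0 -> u = 0.
Proof.
rewrite dotE => u0; apply/matrixP => a b; rewrite (ord1 b) mxE; apply/eqP.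
have sq0 : \sum_c u c 0 ^+ 2 = 0.
  by rewrite -[RHS]u0; apply: eq_bigr => c _; rewrite expr2.
by rewrite -sqrf_eq0 (psumr_eq0P (fun c _ => sqr_ge0 (u c 0)) sq0).
Qed.

Lemma dot_sum_le_card k (I : finType) (A : {pred I}) (F : I -> 'cV[R]_k) :
  dot (\sum_(j in A) F j) (\sum_(j in A) F j) <= #|A|%:R * \sum_(j in A) dot (F j) (F j).
Proof.
have le_mean j l : dot (F j) (F l) <= (dot (F j) (F j) + dot (F l) (F l)) / 2.
  by have := dot_self_ge0 (F j - F l); rewrite dotBl !dotBr (dotC (F l)); lra.
rewrite dot_suml; under eq_bigr do rewrite dot_sumr.
apply: le_trans (ler_sum _ (fun j _ => ler_sum _ (fun l _ => le_mean j l))) _.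
under eq_bigr do rewrite -mulr_suml big_split /= sumr_const.
rewrite -mulr_suml big_split /= sumrMnl sumr_const -mulr_natl.
set S := \sum_(j in A) _; set N := #|A|%:R; lra.
Qed.

Lemma dot_proj k l (A : 'M[R]_(k, l)) v :
  dot v (A^T *m A *m v) = dot (A *m v) (A *m v).
Proof. by rewrite -mulmxA dot_mulmx trmxK. Qed.

Lemma dot_proj_sqr k l (A : 'M[R]_(k, l)) v : A *m A^T = 1%:M ->
  dot (A^T *m A *m v) (A^T *m A *m v) = dot v (A^T *m A *m v).
Proof.
move=> AAT; have idem : A^T *m A *m A^T *m A = A^T *m A.
  by rewrite -(mulmxA A^T) AAT mulmx1.
by rewrite dot_mulmx trmx_mul trmxK mulmxA mulmxA idem dotC.
Qed.

End DotProduct.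

Section Network.
Variables (R : realFieldType) (m n : nat) (adj : rel 'I_m) (rows : 'I_m -> 'I_m -> nat).
Variable C : forall j i : 'I_m, 'M[R]_(rows j i, n).
Hypothesis adj_sym : symmetric_graph adj.
Hypothesis C_orth : forall i j, adj i j -> C i j *m (C i j)^T = 1%:M.

Definition arc_gain i j : 'M[R]_n := (C i j)^T *m C i j + (C j i)^T *m C j i.
Definition weight i : R := (#|nbrs adj i| + 1)%:R.
Definition stepsize i : R := ((2 * (#|nbrs adj i| + 1))%:R)^-1.

Definition lap (e : 'I_m -> 'cV[R]_n) i :=
  \sum_(j in nbrs adj i) arc_gain i j *m (e i - e j).
Definition update (e : 'I_m -> 'cV[R]_n) i := e i - stepsize i *: lap e i.

Definition lap_form (a b : 'I_m -> 'cV[R]_n) :=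
  \sum_i \sum_(j in nbrs adj i) dot (a i - a j) (arc_gain i j *m (b i - b j)).
Definition wdot (a b : 'I_m -> 'cV[R]_n) := \sum_i weight i * dot (a i) (b i).
Definition wsum (a : 'I_m -> 'cV[R]_n) := \sum_i weight i *: a i.
Definition wmean (a : 'I_m -> 'cV[R]_n) := (\sum_i weight i)^-1 *: wsum a.

Lemma arc_gainC i j : arc_gain j i = arc_gain i j.
Proof. exact: addrC. Qed.

Lemma trmx_arc_gain i j : (arc_gain i j)^T = arc_gain i j.
Proof. by rewrite linearD /= !trmx_mul !trmxK. Qed.

Lemma dot_arc_gain i j v :
  dot v (arc_gain i j *m v) = dot (C i j *m v) (C i j *m v) + dot (C j i *m v) (C j i *m v).
Proof. by rewrite mulmxDl dotDr !dot_proj. Qed.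

Lemma dot_arc_gain_ge0 i j v : 0 <= dot v (arc_gain i j *m v).
Proof. by rewrite dot_arc_gain addr_ge0 // dot_self_ge0. Qed.

Lemma dot_arc_gain_sqr_le i j v : adj j i ->
  dot (arc_gain i j *m v) (arc_gain i j *m v) <= 2 * dot v (arc_gain i j *m v).
Proof.
move=> adj_ji; set a := (C i j)^T *m C i j *m v; set b := (C j i)^T *m C j i *m v.
have aa : dot a a = dot v a by rewrite dot_proj_sqr // C_orth // adj_sym.
have bb : dot b b = dot v b by rewrite dot_proj_sqr // C_orth.
rewrite mulmxDl -/a -/b !dotDl !dotDr (dotC b a) aa bb.
by have := dot_self_ge0 (a - b); rewrite dotBl !dotBr (dotC b a) aa bb; lra.
Qed.

Lemma sum_nbrs_swap (V : nmodType) (F : 'I_m -> 'I_m -> V) :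
  \sum_i \sum_(j in nbrs adj i) F i j = \sum_i \sum_(j in nbrs adj i) F j i.
Proof.
rewrite /nbrs; under eq_bigr do rewrite big_mkcond.
under [RHS]eq_bigr do rewrite big_mkcond.
rewrite [RHS]exchange_big; apply: eq_bigr => i _; apply: eq_bigr => j _.
by rewrite !inE; congr (if _ then _ else _); apply/idP/idP => /adj_sym.
Qed.

Lemma sum_lap_eq0 e : \sum_i lap e i = 0.
Proof.
have opp : \sum_i lap e i = - \sum_i lap e i.
  rewrite /lap -sumrN [LHS]sum_nbrs_swap; apply: eq_bigr => i _.
  by rewrite -sumrN; apply: eq_bigr => j _; rewrite arc_gainC -mulmxN opprB.
have /eqP : (\sum_i lap e i) *+ 2 = 0 by rewrite mulr2n {1}opp addNr.
by rewrite -scaler_nat scaler_eq0 pnatr_eq0 => /eqP.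
Qed.

Lemma sum_dot_lap e : \sum_i dot (e i) (lap e i) = lap_form e e / 2.
Proof.
pose F i j := dot (e i) (arc_gain i j *m (e i - e j)).
have -> : \sum_i dot (e i) (lap e i) = \sum_i \sum_(j in nbrs adj i) F i j.
  by apply: eq_bigr => i _; rewrite dot_sumr.
have -> : lap_form e e = \sum_i \sum_(j in nbrs adj i) F i j
                        + \sum_i \sum_(j in nbrs adj i) F j i.
  rewrite -big_split; apply: eq_bigr => i _; rewrite -big_split; apply: eq_bigr => j _.
  by rewrite /F dotBl (arc_gainC i j) -(opprB (e i)) mulmxN dotNr.
by rewrite -sum_nbrs_swap; field.
Qed.

Lemma lap_form_ge0 e : 0 <= lap_form e e.
Proof. by apply: sumr_ge0 => i _; apply: sumr_ge0 => j _; apply: dot_arc_gain_ge0. Qed.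

Lemma weight_stepsize i : weight i * stepsize i = 2^-1.
Proof. by rewrite /weight /stepsize natrM invfM mulrCA mulfV ?mulr1 // pnatr_eq0 addn1. Qed.

Lemma stepsize_card_le i : stepsize i * #|nbrs adj i|%:R <= 2^-1 - (2 * (m%:R + 1))^-1.
Proof.
have d_le : (#|nbrs adj i| <= m)%N.
  by apply: leq_trans (max_card _) _; rewrite card_ord.
rewrite /stepsize natrM natrD; set d := #|nbrs adj i|%:R.
have d_ge0 : 0 <= d by rewrite ler0n.
have -> : (2%:R * (d + 1))^-1 * d = 2^-1 - (2 * (d + 1))^-1.
  by field; rewrite lt0r_neq0 // ltr_wpDl.
rewrite lerD2l lerN2 lef_pV2 ?posrE ?mulr_gt0 ?ltr_wpDl ?ler0n //.
by rewrite ler_pM2l // lerD2r ler_nat.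
Qed.

Lemma dot_lap_le e i :
  dot (lap e i) (lap e i) <=
  2 * #|nbrs adj i|%:R * \sum_(j in nbrs adj i) dot (e i - e j) (arc_gain i j *m (e i - e j)).
Proof.
apply: le_trans (dot_sum_le_card _ _) _.
rewrite -mulrA mulrCA ler_wpM2l ?ler0n // mulr_sumr.
by apply: ler_sum => j; rewrite inE; apply: dot_arc_gain_sqr_le.
Qed.

Lemma wdot_update_at e i :
  weight i * dot (update e i) (update e i) <=
  weight i * dot (e i) (e i) - dot (e i) (lap e i) + (2^-1 - (2 * (m%:R + 1))^-1) *
    \sum_(j in nbrs adj i) dot (e i - e j) (arc_gain i j *m (e i - e j)).
Proof.
set Q := \sum_(j in _) _; set s := stepsize i; set g := lap e i.
have s_gt0 : 0 < s by rewrite invr_gt0 ltr0n muln_gt0 addn1.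
have w_s : weight i = (2 * s)^-1.
  apply: (mulIf (lt0r_neq0 s_gt0)).
  by rewrite weight_stepsize invfM -mulrA mulVf ?mulr1 ?lt0r_neq0.
have -> : weight i * dot (update e i) (update e i) =
          weight i * dot (e i) (e i) - dot (e i) g + s / 2 * dot g g.
  rewrite /update -/s -/g dotBl !dotBr !dotZl !dotZr (dotC g) w_s.
  by field; rewrite lt0r_neq0.
rewrite lerD2l.
have Q_ge0 : 0 <= Q by apply: sumr_ge0 => j _; apply: dot_arc_gain_ge0.
have := dot_lap_le e i; have := stepsize_card_le i; rewrite -/s -/g -/Q.
have := dot_self_ge0 g; set d := #|nbrs adj i|%:R; nra.
Qed.

Lemma wdot_update_le e :
  wdot (update e) (update e) <= wdot e e - (2 * (m%:R + 1))^-1 * lap_form e e.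
Proof.
apply: le_trans (ler_sum _ (fun i _ => wdot_update_at e i)) _.
rewrite !big_split /= sumrN sum_dot_lap -mulr_sumr.
have := lap_form_ge0 e; rewrite /wdot /lap_form; lra.
Qed.

Lemma wdot_ge0 e : 0 <= wdot e e.
Proof. by apply: sumr_ge0 => i _; rewrite mulr_ge0 ?ler0n ?dot_self_ge0. Qed.

Lemma dot_le_wdot e i : dot (e i) (e i) <= wdot e e.
Proof.
rewrite /wdot (bigD1 i) //= -[leLHS]addr0 lerD //.
  by rewrite ler_peMl ?dot_self_ge0 // ler1n addn1.
by apply: sumr_ge0 => j _; rewrite mulr_ge0 ?ler0n ?dot_self_ge0.
Qed.

Lemma sum_weight_gt0 (i0 : 'I_m) : 0 < \sum_i weight i.
Proof.
rewrite (bigD1 i0) //= ltr_wpDr ?ltr0n ?addn1 //.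
by apply: sumr_ge0 => i _; rewrite ler0n.
Qed.

Lemma wsum_const_eq0 e i : (forall j, e j = e i) -> wsum e = 0 -> e i = 0.
Proof.
move=> e_const; rewrite /wsum; under eq_bigr do rewrite e_const.
by rewrite -scaler_suml => /eqP; rewrite scaler_eq0 gt_eqF ?sum_weight_gt0 // => /eqP.
Qed.

Lemma lap_form_eq0 e :
  lap_form e e = 0 -> forall j i, adj j i -> C j i *m e i = C j i *m e j.
Proof.
move=> L0 j i adj_ji.
have edge0 : dot (e i - e j) (arc_gain i j *m (e i - e j)) = 0.
  have Sge0 i0 :
      0 <= \sum_(j0 in nbrs adj i0) dot (e i0 - e j0) (arc_gain i0 j0 *m (e i0 - e j0)).
    by apply: sumr_ge0 => j0 _; apply: dot_arc_gain_ge0.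
  have Si0 := psumr_eq0P (fun i0 _ => Sge0 i0) L0 (i := i) isT.
  by apply: (psumr_eq0P (fun j0 _ => dot_arc_gain_ge0 _ _ _) Si0); rewrite inE.
move: edge0; rewrite dot_arc_gain => edge0.
have : dot (C j i *m (e i - e j)) (C j i *m (e i - e j)) = 0.
  have := dot_self_ge0 (C i j *m (e i - e j)).
  by have := dot_self_ge0 (C j i *m (e i - e j)); lra.
by move/dot_self_eq0/eqP; rewrite mulmxBr subr_eq0 => /eqP.
Qed.

Lemma lap_form_symbilinear :
  symbilinear (fun a b : {ffun 'I_m -> 'cV[R]_n} => lap_form a b).
Proof.
split=> [a a' b|c a b|a b].
- rewrite /lap_form -big_split; apply: eq_bigr => i _; rewrite -big_split.
  by apply: eq_bigr => j _ /=; rewrite !ffunE -dotDl opprD addrACA.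
- rewrite /lap_form mulr_sumr; apply: eq_bigr => i _; rewrite mulr_sumr.
  by apply: eq_bigr => j _; rewrite !ffunE -scalerBr dotZl.
- rewrite /lap_form; apply: eq_bigr => i _; apply: eq_bigr => j _.
  by rewrite dot_mulmx trmx_arc_gain dotC.
Qed.

Lemma wdot_symbilinear : symbilinear (fun a b : {ffun 'I_m -> 'cV[R]_n} => wdot a b).
Proof.
split=> [a a' b|c a b|a b].
- by rewrite /wdot -big_split; apply: eq_bigr => i _; rewrite ffunE dotDl mulrDr.
- by rewrite /wdot mulr_sumr; apply: eq_bigr => i _; rewrite ffunE dotZl mulrCA.
- by apply: eq_bigr => i _; rewrite dotC.
Qed.

Lemma dot_wsum_symbilinear :
  symbilinear (fun a b : {ffun 'I_m -> 'cV[R]_n} => dot (wsum a) (wsum b)).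
Proof.
split=> [a a' b|c a b|a b]; last exact: dotC.
- rewrite -dotDl /wsum -big_split; congr (dot _ _); apply: eq_bigr => i _.
  by rewrite ffunE scalerDr.
- rewrite -dotZl /wsum scaler_sumr; congr (dot _ _); apply: eq_bigr => i _.
  by rewrite ffunE !scalerA mulrC.
Qed.

Lemma wsum_update e : wsum (update e) = wsum e.
Proof.
rewrite /wsum /update; under eq_bigr do rewrite scalerBr scalerA weight_stepsize.
by rewrite sumrB -scaler_sumr sum_lap_eq0 scaler0 subr0.
Qed.

Lemma update_subr e c : update (fun i => e i - c) = (fun i => update e i - c).
Proof.
apply: functional_extensionality => i; rewrite /update /lap addrAC.
congr (_ - _ *: _ - _).
by apply: eq_bigr => j _; rewrite opprB addrA subrK.
Qed.

(* [i0] only witnesses that there are agents. *)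
Lemma wsum_sub_wmean e (i0 : 'I_m) : wsum (fun i => e i - wmean e) = 0.
Proof.
rewrite /wsum; under eq_bigr do rewrite scalerBr.
rewrite sumrB -scaler_suml /wmean scalerA mulfV ?scale1r ?subrr //.
exact/lt0r_neq0/sum_weight_gt0.
Qed.

End Network.

Section Coercivity.
Variables (R : realType) (m n : nat) (adj : rel 'I_m) (rows : 'I_m -> 'I_m -> nat).
Variable C : forall j i : 'I_m, 'M[R]_(rows j i, n).
Hypothesis adj_sym : symmetric_graph adj.
Hypothesis C_orth : forall i j, adj i j -> C i j *m (C i j)^T = 1%:M.
Hypothesis C_wc : well_configured adj C.

Lemma lap_form_coercive : exists2 lam, 0 < lam &
  forall e, wsum adj e = 0 -> lam * wdot adj e e <= lap_form adj C e e.
Proof.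
have posdef (u : {ffun 'I_m -> 'cV[R]_n}) :
    u != 0 -> 0 < lap_form adj C u u + dot (wsum adj u) (wsum adj u).
  move=> u_neq0; rewrite lt_neqAle addr_ge0 ?lap_form_ge0 ?dot_self_ge0 // andbT.
  apply: contra u_neq0 => /eqP/esym sum0.
  have L0 : lap_form adj C u u = 0.
    by have := lap_form_ge0 adj C u; have := dot_self_ge0 (wsum adj u); lra.
  have S0 : wsum adj u = 0 by apply: dot_self_eq0; rewrite -sum0 L0 add0r.
  apply/eqP/ffunP => i; rewrite ffunE; apply: wsum_const_eq0 S0 => j.
  exact: C_wc (lap_form_eq0 L0) j i.
have [lam lam_gt0 dominates] := posdef_dominates
  (symbilinearD (lap_form_symbilinear adj C) (dot_wsum_symbilinear R n adj))
  (wdot_symbilinear R n adj) posdef.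
exists lam => // e wsum_e0; have := dominates (finfun e).
have -> : (finfun e : 'I_m -> 'cV[R]_n) = e.
  by apply: functional_extensionality => i; rewrite ffunE.
by rewrite wsum_e0 dot0l addr0.
Qed.

Lemma update_contraction :
  exists2 r, 0 <= r < 1 &
    forall e, wsum adj e = 0 ->
      wdot adj (update adj C e) (update adj C e) <= r * wdot adj e e.
Proof.
have [lam lam_gt0 coercive] := lap_form_coercive.
pose k : R := (2 * (m%:R + 1))^-1.
have k_gt0 : 0 < k by rewrite invr_gt0 mulr_gt0 // ltr_wpDl ?ler0n.
exists (Num.max (1 - k * lam) 0) => [|e wsum_e0].
  by rewrite le_max lexx orbT /= gt_max ltr01 andbT ltrBlDr ltrDl mulr_gt0.
have := wdot_update_le adj_sym C_orth e; rewrite -/k.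
have := coercive e wsum_e0; have := wdot_ge0 adj e.
have : 1 - k * lam <= Num.max (1 - k * lam) 0 by rewrite le_max lexx.
set r := Num.max _ _; nra.
Qed.

End Coercivity.

Lemma geometric_decay (R : realFieldType) (a : nat -> R) (r : R) :
  0 <= r -> (forall t, a t.+1 <= r * a t) -> forall t, a t <= r ^+ t * a 0%N.
Proof.
move=> r_ge0 step; elim=> [|t IH]; first by rewrite expr0 mul1r.
by rewrite (le_trans (step t)) // exprS -mulrA ler_wpM2l.
Qed.

Lemma sqrtrX (R : rcfType) (r : R) t : 0 <= r -> Num.sqrt (r ^+ t) = Num.sqrt r ^+ t.
Proof.
move=> r_ge0; elim: t => [|t IH]; first by rewrite !expr0 sqrtr1.
by rewrite !exprS sqrtrM // IH.
Qed.

Lemma vnormE (R : realType) n (v : 'cV[R]_n) : vnorm v = Num.sqrt (dot v v).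
Proof. by rewrite /vnorm dotE; congr Num.sqrt; apply: eq_bigr => k _; rewrite expr2. Qed.

Theorem theorem5 (R : realType) (m n : nat) (adj : rel 'I_m)
    (rows : 'I_m -> 'I_m -> nat) (C : forall j i : 'I_m, 'M[R]_(rows j i, n))
    (x : nat -> 'I_m -> 'cV[R]_n) :
  symmetric_graph adj ->
  no_self_arcs adj ->
  strongly_connected adj ->
  (forall i j, adj i j -> C i j *m (C i j)^T = 1%:M) ->
  well_configured adj C ->
  (forall t i,
     x t.+1 i =
       x t i -
       ((2 * (#|nbrs adj i| + 1))%:R)^-1 *:
         \sum_(j in nbrs adj i)
            ((C i j)^T *m C i j + (C j i)^T *m C j i) *m (x t i - x t j)) ->
  exists xstar : 'cV[R]_n, exists c : R, exists rho : R,
    0 < c /\ 0 <= rho < 1 /\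
    forall (i : 'I_m) (t : nat), vnorm (x t i - xstar) <= c * rho ^+ t.
Proof.
move=> adj_sym _ _ C_orth C_wc x_next.
have x_update t : x t.+1 = update adj C (x t).
  by apply: functional_extensionality => i; rewrite x_next.
have wmean_x t : wmean adj (x t) = wmean adj (x 0%N).
  by elim: t => // t IH; rewrite x_update /wmean wsum_update.
pose dev t i := x t i - wmean adj (x 0%N).
have dev_update t : dev t.+1 = update adj C (dev t) by rewrite /dev update_subr x_update.
have [r /andP [r_ge0 r_lt1] contract] := update_contraction adj_sym C_orth C_wc.
pose N0 := wdot adj (dev 0%N) (dev 0%N).
exists (wmean adj (x 0%N)), (Num.sqrt N0 + 1), (Num.sqrt r).
split; first by rewrite ltr_wpDl ?sqrtr_ge0.
split; first by rewrite sqrtr_ge0 /= -sqrtr1 ltr_sqrt.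
move=> i t; have decay : wdot adj (dev t) (dev t) <= r ^+ t * N0.
  apply: (geometric_decay (a := fun t => wdot adj (dev t) (dev t))) => // s.
  by rewrite dev_update contract // /dev -(wmean_x s) (wsum_sub_wmean _ _ i).
rewrite vnormE (le_trans (ler_wsqrtr (le_trans (dot_le_wdot _ _ i) decay))) //.
rewrite sqrtrM ?exprn_ge0 // sqrtrX // mulrC ler_wpM2r ?exprn_ge0 ?sqrtr_ge0 //.
by rewrite lerDl.
Qed.
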